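(* Let $S$ be any string of length $n$ satisfying the $\varepsilon$-self-matching property. Then $S$ together with the minimum relative suffix distance decoding algorithm is an $(n,\delta)$-indexing algorithm with at most $n(4\delta+6\varepsilon)$ misdecodings.
   Context: $\mathrm{ED}$ is insertion/deletion edit distance; $S[i,j]$ is positions $i..j$, $S(i,j]=S[i+1,j]$, and for $i<1$, $S[i,j]=\bot^{-i+1}S[1,j]$ with $\bot$ not in the alphabet. $\mathrm{RSD}(S,S')=\max_{k>0}\frac{\mathrm{ED}(S(|S|-k,|S|],S'(|S'|-k,|S'|])}{2k}$. A monotone matching between $S$ and itself is a set of pairs $(a_1,b_1),\dots,(a_m,b_m)$ with $a_1<\dots<a_m$, $b_1<\dots<b_m$, $S[a_i]=S[b_i]$; a pair is bad if $a_i\ne b_i$. $S$ satisfies the $\varepsilon$-self-matching property if every such matching has fewer than $\varepsilon|S|$ bad pairs. Indexing problem: an adversary applies at most $n\delta$ insertions and deletions to $S$, producing $S_\tau$, with an order-preserving alignment in which each $S[i]$ is deleted or delivered unchanged as a unique symbol of $S_\tau$, and other symbols of $S_\tau$ are inserted. An $(n,\delta)$-indexing algorithm outputs for each position of $S_\tau$ either $\bot$ or an index in $\{1,\dots,n\}$; a successfully transmitted position (delivered from $S[i]$) is correctly decoded if the output is $i$; the algorithm has at most $k$ misdecodings if for every such corruption at most $k$ successfully transmitted positions are not correctly decoded. The minimum relative suffix distance decoding algorithm outputs for position $j$ of $S_\tau$ an index $l$ minimizing $\mathrm{RSD}(S[1,l],S_\tau[1,j])$. *)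

From HB Require Import structures.
From mathcomp Require Import all_boot all_order all_algebra.
From mathcomp Require Import boolp classical_sets reals.
Set Implicit Arguments. Unset Strict Implicit. Unset Printing Implicit Defensive.
Import Order.TTheory GRing.Theory Num.Theory.
Local Open Scope ring_scope.
Local Open Scope classical_set_scope.

Section Defs.
Variable T : eqType.

Definition lcs (a b : seq T) : nat :=
  (\max_(m : (size a).-tuple bool | subseq (mask m a) b) size (mask m a))%N.

(* Insertion/deletion edit distance: delete |a|-|c| symbols of a to reach a
   common subsequence c, then insert |b|-|c| symbols; minimised over c. *)
Definition ED (a b : seq T) : nat := (size a + size b - 2 * lcs a b)%N.
End Defs.

(* Strings over alphabet T; [None] plays the role of the padding symbol ⊥. *)
(* suffix k S = S(|S|-k, |S|] = S[|S|-k+1, |S|], padded on the left with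
   ⊥^(k-|S|) when k > |S|. *)
Definition suffix (T : eqType) (k : nat) (S : seq T) : seq (option T) :=
  drop (size S - k) (nseq (k - size S) None ++ map Some S).

Definition RSD (R : realType) (T : eqType) (S S' : seq T) : R :=
  sup [set r : R | exists2 k : nat, (0 < k)%N &
         r = (ED (suffix k S) (suffix k S'))%:R / (2 * k%:R)].

(* A monotone matching between S and S' (1-indexed positions): pairs
   (a_i, b_i) strictly increasing in both coordinates, with S[a_i] = S'[b_i]. *)
Definition monotone_matching (T : eqType) (S S' : seq T)
    (M : seq (nat * nat)) : bool :=
  sorted (fun p q : nat * nat => (p.1 < q.1)%N && (p.2 < q.2)%N) M &&
  all (fun p : nat * nat =>
         [&& (0 < p.1 <= size S)%N, (0 < p.2 <= size S')%N &
             onth S p.1.-1 == onth S' p.2.-1]) M.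

Definition bad_pairs (M : seq (nat * nat)) : nat :=
  count (fun p : nat * nat => p.1 != p.2) M.

Definition self_matching (R : realType) (T : eqType) (eps : R) (S : seq T) :=
  forall M, monotone_matching S S M -> (bad_pairs M)%:R < eps * (size S)%:R.

Definition min_RSD_decoder (R : realType) (T : eqType) (S St : seq T)
    (dec : nat -> nat) : Prop :=
  forall j, (1 <= j <= size St)%N ->
    (1 <= dec j <= size S)%N /\
    forall l, (1 <= l <= size S)%N ->
      RSD R (take (dec j) S) (take j St) <= RSD R (take l S) (take j St).

(* A corruption St of S with alignment M: M is an order-preserving matching
   of delivered symbols (S[i] delivered as St[j] for (i,j) in M); symbols of S
   not in M are deleted, symbols of St not in M are inserted. *)
Definition num_edits (T : eqType) (S St : seq T) (M : seq (nat * nat)) : nat :=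
  (size S - size M + (size St - size M))%N.

Definition misdecodings (M : seq (nat * nat)) (dec : nat -> nat) : nat :=
  count (fun p : nat * nat => dec p.2 != p.1) M.

(* Split the misdecoded positions [j], delivered from [S[i]], according to
   whether some suffixes of [S[1,i]] and [St[1,j]] witness an RSD of at least
   1/4 ("far" positions) or not.
   A far pair of suffixes of length [k] leaves about [k/4] of the last [k]
   aligned symbols unmatched, so they were deleted or inserted; charging the
   far positions to the edits with a potential argument bounds their number
   by [4 n delta].
   A close position decoded to [l <> i] has RSD(S[1,l], St[1,j]) <=
   RSD(S[1,i], St[1,j]) < 1/4, so by the triangle inequality for the longest
   common subsequence the suffixes of length [|i - l|] of [S[1,i]] and
   [S[1,l]] share more than half of their symbols: a box of more than
   [|i - l| / 2] repeated pairs of [S]. A Vitali-type covering selects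
   mutually comparable boxes whose pairs number at least a sixth of these
   positions; sorted, they form a self-matching of [S] made of bad pairs only,
   so there are fewer than [6 eps n] such positions. *)

From Pilot Require Import Defs.
From HB Require Import structures.
From mathcomp Require Import all_boot all_order all_algebra.
From mathcomp Require Import boolp classical_sets reals.
From mathcomp Require Import zify lra.
Import Order.TTheory GRing.Theory Num.Theory.
Set Implicit Arguments. Unset Strict Implicit. Unset Printing Implicit Defensive.

(* [seq]'s [suffix] shadows the one of [Defs]. *)
Local Notation sfx := Defs.suffix.

Definition before (p q : nat * nat) := (p.1 < q.1)%N && (p.2 < q.2)%N.

Lemma before_trans : transitive before.
Proof. by move=> q p r /andP[? ?] /andP[? ?]; apply/andP; split; lia. Qed.

Lemma before_irr : irreflexive before.
Proof. by move=> p; rewrite /before ltnn. Qed.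

Section Indices.
Local Open Scope nat_scope.

Lemma sorted_ltn_subseq_iota (s : seq nat) m n :
  sorted ltn s -> {subset s <= iota m n} -> subseq s (iota m n).
Proof.
move=> s_sorted s_sub; have -> : s = filter (mem s) (iota m n).
  apply: (irr_sorted_eq ltn_trans ltnn) => //.
    exact/sorted_filter/iota_ltn_sorted/ltn_trans.
  move=> i; rewrite mem_filter /=.
  by case: (boolP (i \in s)) => // /s_sub ->.
exact: filter_subseq.
Qed.

Lemma all_zip_eq_map (A B : Type) (C : eqType) (f : A -> C) (g : B -> C)
    (s : seq A) (t : seq B) :
  map f s = map g t -> all (fun p => f p.1 == g p.2) (zip s t).
Proof. by elim: s t => [|x s IH] [|y t] //= [-> /IH ->]; rewrite eqxx. Qed.

Lemma all_zip (A B : Type) (P : pred A) (Q : pred B) (s : seq A) (t : seq B) :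
  all P s -> all Q t -> all (fun p => P p.1 && Q p.2) (zip s t).
Proof.
by elim: s t => [|x s IH] [|y t] //= /andP[-> /IH all_s] /andP[-> /all_s].
Qed.

Lemma sorted_zip (r : rel nat) (s t : seq nat) : transitive r ->
  sorted r s -> sorted r t ->
  sorted (fun p q => r p.1 q.1 && r p.2 q.2) (zip s t).
Proof.
move=> r_trans; rewrite !sorted_pairwise //; last first.
  by move=> q p u /andP[? ?] /andP[? ?]; apply/andP; split; apply: r_trans; eassumption.
elim: s t => [|x s IH] [|y t] //= /andP[xs ps] /andP[yt pt]; rewrite IH // andbT.
elim: s t {IH ps pt} xs yt => [|x' s IH] [|y' t] //= /andP[-> xs] /andP[-> yt].
exact: IH.
Qed.

End Indices.

Section LongestCommonSubsequence.
Local Open Scope nat_scope.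
Variable T : eqType.
Implicit Types a b c : seq T.

Lemma size_common_subseq a b c : subseq c a -> subseq c b -> size c <= lcs a b.
Proof.
case/subseqP=> m size_m -> sub_b.
have size_m' : size m == size a by apply/eqP.
rewrite /lcs; exact: (@leq_bigmax_cond _
  (fun t : (size a).-tuple bool => subseq (mask t a) b) (fun t => size (mask t a))
  (Tuple size_m') sub_b).
Qed.

Lemma lcs_common_subseq a b :
  exists c, [/\ subseq c a, subseq c b & size c = lcs a b].
Proof.
pose t0 : (size a).-tuple bool := nseq_tuple (size a) false.
have t0_sub : subseq (mask t0 a) b by rewrite /= mask_false sub0seq.
rewrite /lcs (bigop.bigmax_eq_arg t0 t0_sub).
case: arg_maxnP => // t t_sub _.
by exists (mask t a); split => //; apply: mask_subseq.
Qed.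

Lemma lcsC a b : lcs a b = lcs b a.
Proof.
have [c [ca cb E]] := lcs_common_subseq a b.
have [c' [c'b c'a E']] := lcs_common_subseq b a.
by apply/anti_leq/andP; split; [rewrite -E | rewrite -E']; apply: size_common_subseq.
Qed.

Lemma lcs_leq_sizel a b : lcs a b <= size a.
Proof. by have [c [ca _ <-]] := lcs_common_subseq a b; apply: size_subseq. Qed.

Lemma mask_andb_subseq (m1 m2 : bitseq) (s : seq T) :
  size m1 = size s -> size m2 = size s ->
  subseq (mask [seq x.1 && x.2 | x <- zip m1 m2] s) (mask m1 s).
Proof.
elim: s m1 m2 => [|x s IH] [|b1 m1] [|b2 m2] //= [size1] [size2].
have := IH _ _ size1 size2; case: b1; case: b2 => //= sub; first by rewrite eqxx.
exact: subseq_trans sub (subseq_cons _ _).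
Qed.

Lemma count_zip_andb (m1 m2 : bitseq) : size m1 = size m2 ->
  count id m1 + count id m2 <= count id [seq x.1 && x.2 | x <- zip m1 m2] + size m1.
Proof.
elim: m1 m2 => [|b1 m1 IH] [|b2 m2] //= [/IH]; case: b1; case: b2 => /=; lia.
Qed.

(* Two common subsequences of [b] share at least [|c1| + |c2| - |b|] of its
   positions, and these form a common subsequence of [a] and [c]. *)
Lemma lcs_triangle a b c : lcs a b + lcs b c <= lcs a c + size b.
Proof.
have [c1 [c1a /subseqP[m1 size_m1 c1E] <-]] := lcs_common_subseq a b.
have [c2 [/subseqP[m2 size_m2 c2E] c2c <-]] := lcs_common_subseq b c.
pose m := [seq x.1 && x.2 | x <- zip m1 m2].
have m_sym : m = [seq x.1 && x.2 | x <- zip m2 m1].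
  rewrite /m; elim: (m1) (m2) => [|x1 m1' IH] [|x2 m2'] //=.
  by rewrite andbC IH.
have sub1 : subseq (mask m b) c1 by rewrite c1E; apply: mask_andb_subseq.
have sub2 : subseq (mask m b) c2 by rewrite c2E m_sym; apply: mask_andb_subseq.
have := size_common_subseq (subseq_trans sub1 c1a) (subseq_trans sub2 c2c).
have size_m : size m = size b by rewrite size_map size_zip size_m1 size_m2 minnn.
rewrite c1E c2E !size_mask //.
have := count_zip_andb (etrans size_m1 (esym size_m2)); rewrite -/m size_m1; lia.
Qed.

End LongestCommonSubsequence.

Lemma lcs_map (A B : eqType) (f : A -> B) (a b : seq A) :
  injective f -> lcs (map f a) (map f b) = lcs a b.
Proof.
move=> f_inj; apply/anti_leq/andP; split.
  have [c [/subseqP[m _ ->] mb <-]] := lcs_common_subseq (map f a) (map f b).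
  rewrite -map_mask size_map; apply: size_common_subseq; first exact: mask_subseq.
  case/subseqP: mb => m' _; rewrite -!map_mask => /(inj_map f_inj) ->.
  exact: mask_subseq.
have [c [ca cb <-]] := lcs_common_subseq a b.
by rewrite -(size_map f); apply: size_common_subseq; apply: map_subseq.
Qed.

Section MatchingLcs.
Local Open Scope nat_scope.
Variable T : eqType.
Implicit Types a b : seq T.

Lemma map_onth_iota a : [seq onth a i.-1 | i <- iota 1 (size a)] = map Some a.
Proof.
rewrite (iotaDl 1 0) -map_comp.
rewrite (eq_map (_ : _ =1 nth None (map Some a))); last by move=> i; rewrite /= onthE.
by rewrite -(size_map Some) map_nth_iota0 // take_size.
Qed.

Lemma size_matching_leq_lcs a b L : monotone_matching a b L -> size L <= lcs a b.
Proof.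
case/andP=> L_sorted L_ok; rewrite -(lcs_map _ _ Some_inj).
have [ia_sorted ib_sorted] : sorted ltn (map fst L) /\ sorted ltn (map snd L).
  by split; apply: homo_sorted L_sorted => p q /andP[].
have ia_sub : subseq (map fst L) (iota 1 (size a)).
  apply: sorted_ltn_subseq_iota => // _ /mapP[p /(allP L_ok) + ->].
  by rewrite mem_iota => /and3P[/andP[]]; lia.
have ib_sub : subseq (map snd L) (iota 1 (size b)).
  apply: sorted_ltn_subseq_iota => // _ /mapP[p /(allP L_ok) + ->].
  by rewrite mem_iota => /and3P[_ /andP[]]; lia.
have E : [seq onth a i.-1 | i <- map fst L] = [seq onth b i.-1 | i <- map snd L].
  by rewrite -!map_comp; apply/eq_in_map => p /(allP L_ok) /and3P[_ _ /eqP].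
rewrite -(size_map fst) -(size_map (fun i => onth a i.-1)).
apply: size_common_subseq; rewrite -map_onth_iota; first exact: map_subseq.
by rewrite E; apply: map_subseq.
Qed.

Lemma lcs_matching a b : exists2 L, monotone_matching a b L & size L = lcs a b.
Proof.
have [c [/subseqP[m size_m ->] /subseqP[m' size_m' Ec] <-]] := lcs_common_subseq a b.
pose ia := mask m (iota 1 (size a)); pose ib := mask m' (iota 1 (size b)).
have E : [seq onth a i.-1 | i <- ia] = [seq onth b i.-1 | i <- ib].
  by rewrite !map_mask !map_onth_iota -!map_mask Ec.
exists (zip ia ib); last first.
  have size_c : count id m' = count id m.
    by rewrite -(size_mask size_m) -(size_mask size_m') Ec.
  by rewrite size_zip !size_mask ?size_iota // size_c minnn.
have ia_sorted : sorted ltn ia :=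
  subseq_sorted ltn_trans (mask_subseq _ _) (iota_ltn_sorted _ _).
have ib_sorted : sorted ltn ib :=
  subseq_sorted ltn_trans (mask_subseq _ _) (iota_ltn_sorted _ _).
rewrite /monotone_matching (sorted_zip ltn_trans ia_sorted ib_sorted) /=.
have ia_range : all (fun i => 0 < i <= size a) ia.
  by apply/allP => i /(mem_subseq (mask_subseq _ _)); rewrite mem_iota; lia.
have ib_range : all (fun i => 0 < i <= size b) ib.
  by apply/allP => i /(mem_subseq (mask_subseq _ _)); rewrite mem_iota; lia.
apply/allP => p p_in.
case/andP: (allP (all_zip ia_range ib_range) p p_in) => -> -> /=.
exact: (allP (all_zip_eq_map E) p p_in).
Qed.

End MatchingLcs.

Section Suffixes.
Local Open Scope nat_scope.
Variable T : eqType.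
Implicit Types s x y : seq T.

Lemma onth_take s v i : i < v -> onth (take v s) i = onth s i.
Proof. by elim: s v i => [|a s IH] [|v] [|i] //= ?; apply: IH. Qed.

Lemma onth_lt_size s i : i < size s -> onth s i != None.
Proof. by rewrite -onthTE; case: onth. Qed.

Lemma suffixE k s : sfx k s = nseq (k - size s) None ++ map Some (drop (size s - k) s).
Proof.
rewrite /Defs.suffix; case: (leqP k (size s)) => ks.
  have -> : k - size s = 0 by lia.
  by rewrite map_drop.
have -> : size s - k = 0 by lia.
by rewrite !drop0.
Qed.

Lemma size_suffix k s : size (sfx k s) = k.
Proof. by rewrite suffixE size_cat size_nseq size_map size_drop; lia. Qed.

Lemma onth_suffix k s i : i < k ->
  onth (sfx k s) i = Some (if i + size s < k then None else onth s (i + size s - k)).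
Proof.
move=> ik; rewrite onthE (nth_map None) ?size_suffix // suffixE nth_cat size_nseq.
case: ifP => pad; case: ifP => pad' //; try lia.
  by rewrite nth_nseq pad.
by rewrite onthE map_drop nth_drop; congr (Some (nth _ _ _)); lia.
Qed.

Lemma lcs_suffix_leq k x y : lcs (sfx k x) (sfx k y) <= k.
Proof. by have := lcs_leq_sizel (sfx k x) (sfx k y); rewrite size_suffix. Qed.

Lemma ED_suffix k x y : ED (sfx k x) (sfx k y) = 2 * (k - lcs (sfx k x) (sfx k y)).
Proof. by rewrite /ED !size_suffix; have := lcs_suffix_leq k x y; lia. Qed.

End Suffixes.

(* Some suffix length witnesses [RSD x y >= 1/4]. *)
Definition far (T : eqType) (x y : seq T) : bool :=
  `[< exists2 k, (0 < k)%N & (k <= 2 * ED (sfx k x) (sfx k y))%N >].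

Section RelativeSuffixDistance.
Local Open Scope ring_scope.
Local Open Scope classical_set_scope.
Variables (R : realType) (T : eqType).
Implicit Types x y : seq T.

Let ratios x y := [set r : R | exists2 k : nat, (0 < k)%N &
                     r = (ED (sfx k x) (sfx k y))%:R / (2 * k%:R)].

Lemma ratio_leq_quarter (e k : nat) : (0 < k)%N ->
  (e%:R / (2 * k%:R) <= 1 / 4 :> R) = (2 * e <= k)%N.
Proof.
move=> k0; have k0' : (0 : R) < 2 * k%:R by rewrite mulr_gt0 // ltr0n.
by rewrite ler_pdivrMr // -(ler_nat R) natrM; apply/idP/idP => ?; lra.
Qed.

Lemma ratios_ubound x y : has_ubound (ratios x y).
Proof.
exists 1 => r [k k0 ->]; have k0' : (0 : R) < 2 * k%:R by rewrite mulr_gt0 // ltr0n.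
by rewrite ler_pdivrMr // mul1r -natrM ler_nat ED_suffix leq_mul2l leq_subr orbT.
Qed.

Lemma RSD_le_quarter x y :
  RSD R x y <= 1 / 4 <-> forall k, (0 < k)%N -> (2 * ED (sfx k x) (sfx k y) <= k)%N.
Proof.
split=> [RSD_le k k0 | ratios_le].
  rewrite -(ratio_leq_quarter _ k0); apply: le_trans RSD_le.
  by apply: (ub_le_sup (ratios_ubound x y)); exists k.
apply: ge_sup; first by exists ((ED (sfx 1 x) (sfx 1 y))%:R / (2 * 1%:R)), 1%N.
by move=> _ [k k0 ->]; rewrite ratio_leq_quarter // ratios_le.
Qed.

Lemma RSD_le_quarter_not_far x y : ~~ far x y -> RSD R x y <= 1 / 4.
Proof.
move=> not_far; apply/RSD_le_quarter => k k0; apply: ltnW; rewrite ltnNge.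
by apply: contra not_far => ?; apply/asboolP; exists k.
Qed.

End RelativeSuffixDistance.

Section Potential.
Local Open Scope nat_scope.

Lemma count_take_leq (A : Type) (a : pred A) (s : seq A) t r : t <= r ->
  count a (take r s) <= count a (take t s) + (r - t).
Proof.
move=> tr; rewrite -(cat_take_drop t (take r s)) count_cat take_takel // leq_add2l.
apply: leq_trans (count_size _ _) _; rewrite size_drop size_take; case: ifP; lia.
Qed.

Lemma count_le_potential (A : Type) (x0 : A) (a : pred A) (s : seq A)
    (g : nat -> nat) (c : nat) :
  (forall i j, i <= j <= size s -> g i <= g j) ->
  (forall r, r < size s -> a (nth x0 s r) ->
     exists2 t, t <= r & r.+1 - t <= c * (g r.+1 - g t)) ->
  count a s <= c * (g (size s) - g 0).
Proof.
move=> g_mono step.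
suff: forall r, r <= size s -> count a (take r s) <= c * (g r - g 0).
  by move/(_ (size s) (leqnn _)); rewrite take_size.
elim/ltn_ind=> -[|r] IH rs; first by rewrite take0.
have [g0r gr] : g 0 <= g r /\ g r <= g r.+1 by split; apply: g_mono; lia.
rewrite (take_nth x0 rs) -cats1 count_cat /= addn0.
case: (boolP (a (nth x0 s r))) => a_r; last first.
  rewrite addn0; apply: leq_trans (IH r _ _) _ => //; first lia.
  by rewrite leq_mul2l; apply/orP; right; lia.
have [t tr window] := step r rs a_r; rewrite addn1.
have [g0t gt] : g 0 <= g t /\ g t <= g r.+1 by split; apply: g_mono; lia.
have := IH t (ltac:(lia) : t < r.+1) (ltac:(lia) : t <= size s).
have := count_take_leq a s tr; nia.
Qed.

End Potential.

Section Alignment.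
Local Open Scope nat_scope.
Variables (T : eqType) (S St : seq T) (M : seq (nat * nat)).
Hypothesis HM : monotone_matching S St M.

(* [(src t, dst t)] is the [t]-th pair of the alignment [M] (counting from 1),
   with the sentinel [(src 0, dst 0) = (0, 0)]. *)
Definition src t := (nth (0, 0) ((0, 0) :: M) t).1.
Definition dst t := (nth (0, 0) ((0, 0) :: M) t).2.

(* Deletions in [S[1, src t]] plus insertions in [St[1, dst t]]. *)
Definition gap t := src t + dst t - 2 * t.

Lemma src_dst_lt x y : x < y <= size M -> src x < src y /\ dst x < dst y.
Proof.
have sorted0 : sorted before ((0, 0) :: M).
  case/andP: HM; case: M => //= p M' -> /andP[/and3P[/andP[p1 _] /andP[p2 _] _] _].
  by rewrite /before p1 p2.
move=> /andP[xy yM].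
have := sorted_ltn_nth before_trans (0, 0) sorted0 x y; rewrite !inE /=.
by move=> /(_ _ _ xy) /andP[] //; lia.
Qed.

Lemma src_dst_shift x y : x <= y <= size M ->
  src x + (y - x) <= src y /\ dst x + (y - x) <= dst y.
Proof.
elim: y => [|y IH] /andP[xy yM]; first by have -> : x = 0 by lia.
case: (ltngtP x y.+1) => [xy'|xy'|<-]; [|lia|by rewrite subnn !addn0].
have [IH1 IH2] := IH (ltac:(lia) : x <= y <= size M).
have [lt1 lt2] := src_dst_lt (ltac:(lia) : y < y.+1 <= size M); lia.
Qed.

Lemma aligned_symbols t : 0 < t <= size M ->
  [/\ 0 < src t <= size S, 0 < dst t <= size St &
      onth S (src t).-1 = onth St (dst t).-1].
Proof.
case: t => // t /= tM; case/andP: HM => _ /allP /(_ _ (mem_nth (0, 0) tM)).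
by case/and3P=> ? ? /eqP.
Qed.

Lemma src_dst_leq_size r : r <= size M -> src r <= size S /\ dst r <= size St.
Proof.
case: (posnP r) => [-> //|r0 rM].
by have [/andP[_ ?] /andP[_ ?] _] := aligned_symbols (ltac:(lia) : 0 < r <= size M).
Qed.

Lemma gap_mono x y : x <= y <= size M -> gap x <= gap y.
Proof. by move=> xy; have := src_dst_shift xy; rewrite /gap; lia. Qed.

Lemma gap_size : gap (size M) <= num_edits S St M.
Proof.
have [src_le dst_le] := src_dst_leq_size (leqnn (size M)).
have := src_dst_shift (ltac:(lia) : 0 <= size M <= size M).
by rewrite /gap /num_edits; lia.
Qed.

(* The last [r - w] aligned pairs, if they all lie within distance [k] of the
   pair [r], give a matching between the length-[k] suffixes ending there; the
   padding in front of the shorter prefix matches as well. *)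
Lemma window_matching w r k : w <= r <= size M ->
  (forall t, w < t <= r -> src r < src t + k /\ dst r < dst t + k) ->
  monotone_matching (sfx k (take (src r) S)) (sfx k (take (dst r) St))
    ([seq (q, q) | q <- iota 1 (k - maxn (src r) (dst r))] ++
     [seq (src t + k - src r, dst t + k - dst r) | t <- iota w.+1 (r - w)]).
Proof.
move=> /andP[wr rM] close.
have [aS bSt] := src_dst_leq_size rM.
set a := src r in aS close *; set b := dst r in bSt close *.
have in_window t : t \in iota w.+1 (r - w) ->
    [/\ 0 < src t <= a, a < src t + k, 0 < dst t <= b, b < dst t + k &
        onth S (src t).-1 = onth St (dst t).-1].
  rewrite mem_iota => t_range.
  have [/andP[? _] /andP[? _] ?] := aligned_symbols (ltac:(lia) : 0 < t <= size M).
  have [? ?] := src_dst_shift (ltac:(lia) : t <= r <= size M).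
  have [? ?] := close t (ltac:(lia)); split => //; lia.
apply/andP; split.
  rewrite (sorted_pairwise before_trans).
  have iota_lt m n : pairwise ltn (iota m n).
    by rewrite -sorted_pairwise ?iota_ltn_sorted //; apply: ltn_trans.
  rewrite pairwise_cat !pairwise_map; apply/and3P; split.
  - apply/allrelP => _ _ /mapP[q q_in ->] /mapP[t /in_window[? ? ? ? _] ->].
    by move: q_in; rewrite mem_iota /before /=; lia.
  - by apply: sub_pairwise (iota_lt _ _) => q q' qq'; apply/andP.
  - apply: (@sub_in_pairwise _ (mem (iota w.+1 (r - w))) ltn _ _ _ (allss _)
             (iota_lt _ _)).
    move=> t t' /[dup] /in_window[? ? ? ? _] t_in /[dup] /in_window[? ? ? ? _] t'_in tt'.
    move: t_in t'_in; rewrite !mem_iota => ? ?.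
    have [? ?] := src_dst_lt (ltac:(lia) : t < t' <= size M); rewrite /before /=; lia.
rewrite all_cat; apply/andP; split; apply/allP => _ /mapP[t + ->] /=;
  rewrite !size_suffix.
  rewrite mem_iota => t_range.
  rewrite !onth_suffix ?size_takel //; try lia.
  have [pad_a pad_b] : t.-1 + a < k /\ t.-1 + b < k by lia.
  by rewrite pad_a pad_b eqxx andbT; lia.
move=> /in_window[? ? ? ? symbols].
rewrite !onth_suffix ?size_takel //; try lia.
rewrite !ifF; try lia.
rewrite !onth_take; try lia.
have -> : (src t + k - a).-1 + a - k = (src t).-1 by lia.
have -> : (dst t + k - b).-1 + b - k = (dst t).-1 by lia.
by rewrite symbols eqxx andbT; lia.
Qed.

Lemma window_lcs w r k : w <= r <= size M ->
  (forall t, w < t <= r -> src r < src t + k /\ dst r < dst t + k) ->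
  k - maxn (src r) (dst r) + (r - w) <=
    lcs (sfx k (take (src r) S)) (sfx k (take (dst r) St)).
Proof.
move=> wr close; have := size_matching_leq_lcs (window_matching wr close).
by rewrite size_cat !size_map !size_iota.
Qed.

(* If the suffixes of length [k] ending at the pair [r.+1] are far apart, go
   back to the last pair [w] that is at distance at least [k] in [S] or in
   [St]: the pairs in between match inside these suffixes, so the suffix
   symbols they leave unmatched must have been deleted or inserted. *)
Lemma far_step r : r < size M -> far (take (src r.+1) S) (take (dst r.+1) St) ->
  exists2 w, w <= r & r.+1 - w <= 4 * (gap r.+1 - gap w).
Proof.
move=> rM /asboolP[k k0]; rewrite ED_suffix => far_k.
pose reach t := (t <= r) && [|| t == 0, src t + k <= src r.+1 | dst t + k <= dst r.+1].
have reach0 : exists t, reach t by exists 0.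
have reach_le t : reach t -> t <= r by case/andP.
case: (ex_maxnP reach0 reach_le) => w /andP[wr reach_w] w_max.
have close t : w < t <= r.+1 -> src r.+1 < src t + k /\ dst r.+1 < dst t + k.
  move=> /andP[wt]; rewrite leq_eqVlt ltnS => /orP[/eqP -> | tr]; first lia.
  have : ~~ reach t by apply: contraTN wt => /w_max; rewrite -leqNgt.
  by rewrite /reach tr /= !negb_or -!ltnNge => /and3P[_ ? ?].
have lcs_ge := window_lcs (ltac:(lia) : w <= r.+1 <= size M) close.
have lcs_le := lcs_suffix_leq k (take (src r.+1) S) (take (dst r.+1) St).
have [src0 dst0] : src 0 = 0 /\ dst 0 = 0 by [].
have [? ?] := src_dst_shift (ltac:(lia) : w <= r.+1 <= size M).
have [? ?] := src_dst_shift (ltac:(lia) : w.+1 <= r.+1 <= size M).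
have [? ?] := src_dst_shift (ltac:(lia) : 0 <= w <= size M).
have [? ?] := close w.+1 (ltac:(lia)).
exists w => //; rewrite /gap.
by case/or3P: reach_w => [/eqP w0 | ? | ?]; [subst w|..]; lia.
Qed.

Lemma far_count :
  count (fun p => far (take p.1 S) (take p.2 St)) M <= 4 * num_edits S St M.
Proof.
apply: leq_trans (count_le_potential (x0 := (0, 0)) (g := gap) (c := 4) _ _) _.
- by move=> i j; apply: gap_mono.
- exact: far_step.
- by rewrite subn0 leq_mul2l gap_size orbT.
Qed.

End Alignment.

Definition width (p : nat * nat) := (p.2 - p.1)%N.

Definition in_box (p c : nat * nat) :=
  [&& (p.1 < c.1 + width p)%N, (c.1 <= p.1)%N, (p.1 < c.2)%N & (c.2 <= p.2)%N].

Definition near (p : nat * nat) (x : nat) := (p.1 - width p < x <= p.2 + width p)%N.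

(* [q] lies far enough to the left or to the right of [p] for the boxes of [p]
   and [q] to be comparable. *)
Definition separated (p q : nat * nat) :=
  ((q.2 <= p.1) && (q.1 + width p <= p.1))%N ||
  ((p.2 <= q.1) && (p.1 + width q <= q.1))%N.

Definition ordered (c c' : nat * nat) := before c c' || before c' c.

Section Covering.
Local Open Scope nat_scope.

Lemma ordered_irr : irreflexive ordered.
Proof. by move=> c; rewrite /ordered before_irr. Qed.

Lemma separated_ordered p q c c' :
  separated p q -> in_box p c -> in_box q c' -> ordered c c'.
Proof.
rewrite /separated /in_box /ordered /before /width.
by case/orP=> /andP[? ?] /and4P[? ? ? ?] /and4P[? ? ? ?]; apply/orP; [right|left]; lia.
Qed.

Lemma near_not_separated p q : p.1 < p.2 -> 0 < q.1 < q.2 -> width q <= width p ->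
  ~~ separated p q -> near p q.1 && near p q.2.
Proof.
rewrite /separated /near /width => ? ? ?.
rewrite negb_or !negb_and -!ltnNge => /andP[/orP[?|?] /orP[?|?]]; apply/andP; split; lia.
Qed.

Lemma seq_argmax (A : eqType) (f : A -> nat) (s : seq A) :
  s != [::] -> exists2 x, x \in s & {in s, forall y, f y <= f x}.
Proof.
elim: s => // a [|b s] IH _.
  by exists a; rewrite ?inE // => y; rewrite inE => /eqP ->.
have [x xs x_max] := IH isT; case: (leqP (f a) (f x)) => fax.
  by exists x; [rewrite inE xs orbT | move=> y; rewrite inE => /orP[/eqP ->|/x_max]].
exists a; first exact: mem_head.
by move=> y; rewrite inE => /orP[/eqP ->|/x_max] //; lia.
Qed.

Lemma size_uniq_interval (s : seq nat) lo hi :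
  uniq s -> {subset s <= [pred x | lo < x <= hi]} -> size s <= hi - lo.
Proof.
move=> s_uniq s_sub; rewrite -(size_iota lo.+1 (hi - lo)); apply: uniq_leq_size => // x.
by move/s_sub; rewrite inE mem_iota; lia.
Qed.

Variables (T : eqType) (S : seq T).

Definition good p := [&& 0 < p.1, p.1 < p.2, p.2 <= size S &
  width p < 2 * lcs (sfx (width p) (take p.1 S)) (sfx (width p) (take p.2 S))].

Definition repeat_pair c := [&& 0 < c.1, c.1 < c.2, c.2 <= size S &
  onth S c.1.-1 == onth S c.2.-1].

(* A matching of the two suffixes of [p] yields repeated pairs in its box. *)
Lemma good_box p : good p ->
  exists L, [/\ pairwise before L, width p < 2 * size L &
                all (fun c => in_box p c && repeat_pair c) L].
Proof.
case: p => v u /and4P[/= v0 vu uS]; rewrite /width /=; set d := u - v => lcs_big.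
have u_def : u = v + d by rewrite subnKC // ltnW.
have [L /andP[L_sorted L_ok] size_L] := lcs_matching (sfx d (take v S)) (sfx d (take u S)).
have entry i j : (i, j) \in L -> [/\ 0 < i <= d, 0 < j <= d, d < i + v &
    onth S (i + v - d).-1 = onth S (j + v).-1].
  move/(allP L_ok); rewrite !size_suffix /= => /and3P[i_range j_range].
  rewrite !onth_suffix ?size_takel //; try lia.
  have -> : (j.-1 + u < d) = false by lia.
  rewrite [onth (take u S) _]onth_take; last by lia.
  have : onth S (j.-1 + u - d) != None by apply: onth_lt_size; lia.
  case: ifP => pad; first by move=> + /eqP[] none; rewrite -none.
  move=> _ /eqP[]; rewrite onth_take => [symbols|]; last by lia.
  split=> //; first lia.
  have -> : (i + v - d).-1 = i.-1 + v - d by lia.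
  by rewrite symbols; congr onth; lia.
exists [seq (q.1 + v - d, q.2 + v) | q <- L]; split.
- rewrite pairwise_map; move: L_sorted; rewrite (sorted_pairwise before_trans).
  apply: (sub_in_pairwise (P := mem L)); last exact: allss.
  by move=> [i j] [i' j'] /entry[? ? ? _] /entry[? ? ? _]; rewrite /before /=; lia.
- by rewrite size_map size_L.
- rewrite all_map; apply/allP => -[i j] /entry[? ? ? symbols].
  by rewrite /in_box /repeat_pair /width /= symbols eqxx andbT; lia.
Qed.

(* Vitali-type covering: take a good pair [p] of maximal width and the
   repeated pairs in its box; the good pairs not separated from [p] only have
   endpoints near [p], i.e. in an interval of length [3 * width p], which the
   more than [width p / 2] pairs of the box pay for. *)
Lemma vitali_covering (P : seq (nat * nat)) (X : seq nat) :
  all good P -> uniq X -> {in X, forall x, exists2 p, p \in P & x \in [:: p.1; p.2]} ->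
  exists C, [/\ pairwise ordered C, all repeat_pair C,
                {in C, forall c, exists2 p, p \in P & in_box p c} &
                size X <= 6 * size C].
Proof.
have [n] := ubnP (size P); elim: n P X => // n IH P X /ltnSE P_n P_good X_uniq X_cov.
have [P0 | P_nil] := eqVneq P [::].
  exists [::]; split => //; case: X X_cov {X_uniq} => // x X /(_ x (mem_head _ _)).
  by rewrite P0 => -[].
have [p p_in p_max] := seq_argmax width P_nil.
have /and4P[p1 p12 p2 _] := allP P_good p p_in.
have [L [L_before L_size L_box]] := good_box (allP P_good p p_in).
pose P' := filter (separated p) P; pose X' := filter (predC (near p)) X.
have P'_n : size P' < n.
  apply: leq_trans P_n; rewrite size_filter -[size P](count_predC (separated p)).
  rewrite -addn1 leq_add2l -has_count; apply/hasP; exists p => //=.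
  by rewrite /separated /width; apply/negP => /orP[] /andP[]; lia.
have X'_cov : {in X', forall x, exists2 q, q \in P' & x \in [:: q.1; q.2]}.
  move=> x; rewrite mem_filter => /andP[x_out /X_cov[q q_in x_q]].
  exists q => //; rewrite mem_filter q_in andbT; apply: contraNT x_out => not_sep.
  have /and4P[q1 q12 _ _] := allP P_good q q_in.
  have /andP[] :=
    near_not_separated p12 (introT andP (conj q1 q12)) (p_max q q_in) not_sep.
  by move: x_q; rewrite !inE => /orP[] /eqP ->.
have P'_good : all good P'.
  by rewrite all_filter; apply: sub_all P_good => q q_good; apply/implyP.
have [C' [C'_ord C'_rep C'_box C'_size]] :=
  IH P' X' P'_n P'_good (filter_uniq _ X_uniq) X'_cov.
have L_C' : allrel ordered L C'.
  apply/allrelP => c c' c_in /C'_box[q]; rewrite mem_filter => /andP[p_q _].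
  by apply: separated_ordered p_q _; case/andP: (allP L_box c c_in).
exists (L ++ C'); split.
- rewrite pairwise_cat L_C' C'_ord andbT; apply: sub_pairwise L_before.
  by move=> c c' cc'; rewrite /ordered cc'.
- by rewrite all_cat C'_rep andbT; apply: sub_all L_box => c /andP[].
- move=> c; rewrite mem_cat => /orP[/(allP L_box)/andP[c_box _] | /C'_box[q]].
    by exists p.
  by rewrite mem_filter => /andP[_ q_in]; exists q.
- have X_near : count (near p) X <= 3 * width p.
    rewrite -size_filter.
    apply: leq_trans (size_uniq_interval (lo := p.1 - width p) (hi := p.2 + width p) _ _) _.
    + exact: filter_uniq.
    + by move=> x; rewrite mem_filter => /andP[].
    + by rewrite /width; case: (p) p12 => a b /= ?; lia.
  rewrite -(count_predC (near p) X) size_cat mulnDr.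
  by move: C'_size; rewrite size_filter; lia.
Qed.

Lemma ordered_self_matching (C : seq (nat * nat)) :
  pairwise ordered C -> all repeat_pair C ->
  exists2 C', monotone_matching S S C' & bad_pairs C' = size C.
Proof.
move=> C_ord C_rep; pose le1 (c c' : nat * nat) := c.1 <= c'.1.
have C_perm : perm_eq (sort le1 C) C by rewrite perm_sort.
have C_uniq : uniq C by apply: pairwise_uniq ordered_irr C_ord.
have C_cmp : {in C &, forall c c', (c == c') || ordered c c'}.
  apply/allrelP; rewrite -pairwise_all2rel => [|c|c c'].
  - by apply: sub_pairwise C_ord => c c' ->; rewrite orbT.
  - by rewrite eqxx.
  - by rewrite eq_sym /ordered [before c' c || _]orbC.
exists (sort le1 C); last first.
  rewrite /bad_pairs (permP C_perm); apply/eqP.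
  by rewrite -all_count; apply: sub_all C_rep => c /and4P[_ c12 _ _]; rewrite neq_ltn c12.
apply/andP; split.
  have sorted_le1 : pairwise le1 (sort le1 C).
    rewrite -sorted_pairwise ?sort_sorted // => [c c'|c c' c''].
      exact: leq_total.
    exact: leq_trans.
  have sort_uniq : uniq (sort le1 C) by rewrite (perm_uniq C_perm).
  have sort_in_C : all (mem C) (sort le1 C) by rewrite (perm_all _ C_perm); apply/allP.
  rewrite (sorted_pairwise before_trans).
  apply: (@sub_in_pairwise _ (mem C) (fun c c' => le1 c c' && (c != c')) _ _ _ sort_in_C).
    move=> c c' c_in c'_in /andP[c12 cc']; move: (C_cmp c c' c_in c'_in).
    rewrite (negbTE cc') /= /ordered => /orP[// | /andP[c21 _]].
    by move: c12; rewrite /le1 leqNgt c21.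
  by rewrite pairwise_relI -uniq_pairwise sort_uniq sorted_le1.
rewrite (perm_all _ C_perm); apply: sub_all C_rep => c /and4P[? ? ? ->].
by rewrite andbT; apply/andP; split; lia.
Qed.

Lemma good_of_close_suffixes i l (y : seq T) :
  0 < i <= size S -> 0 < l <= size S -> l != i ->
  (forall k, 0 < k -> 2 * ED (sfx k (take i S)) (sfx k y) < k) ->
  (forall k, 0 < k -> 2 * ED (sfx k (take l S)) (sfx k y) <= k) ->
  good (minn i l, maxn i l).
Proof.
move=> i_range l_range li close_i close_l; set d := maxn i l - minn i l.
have d0 : 0 < d by rewrite /d; case: (ltngtP i l) li => //; lia.
have := close_i d d0; move: (close_l d d0); rewrite !ED_suffix.
set X := sfx d (take i S); set Z := sfx d (take l S); set Y := sfx d y => XY ZY.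
have := lcs_triangle X Y Z; rewrite size_suffix [lcs Y Z]lcsC => tri.
have lcs_XZ : d < 2 * lcs X Z.
  by move: (lcs_suffix_leq d (take i S) y) (lcs_suffix_leq d (take l S) y) => *; lia.
rewrite /good /width /= -/d; case: (ltngtP i l) li => // il _.
  by rewrite -/X -/Z lcs_XZ andbT; lia.
by rewrite -/X -/Z lcsC lcs_XZ andbT; lia.
Qed.

End Covering.

Section Misdecodings.
Local Open Scope nat_scope.
Variables (R : realType) (T : eqType) (S St : seq T) (M : seq (nat * nat)).
Variable dec : nat -> nat.
Hypotheses (HM : monotone_matching S St M) (Hdec : min_RSD_decoder R S St dec).

(* A misdecoded position whose correct prefix pair is close (RSD < 1/4) was
   decoded to an index whose prefix is also close, so by the triangle
   inequality the two prefixes of [S] have close suffixes. *)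
Lemma misdecoded_good p : p \in M -> dec p.2 != p.1 ->
  ~~ far (take p.1 S) (take p.2 St) -> good S (minn p.1 (dec p.2), maxn p.1 (dec p.2)).
Proof.
move=> p_in misdecoded not_far.
case/andP: HM => _ /allP /(_ p p_in) /and3P[i_range j_range _].
have [dec_range dec_min] := Hdec j_range.
apply: (good_of_close_suffixes (y := take p.2 St)) => // [k k0|].
  by rewrite ltnNge; apply: contra not_far => ?; apply/asboolP; exists k.
apply/(RSD_le_quarter R); apply: le_trans (dec_min _ i_range) _.
exact: RSD_le_quarter_not_far.
Qed.

Lemma close_misdecodings : exists2 C, monotone_matching S S C &
  count (fun p => (dec p.2 != p.1) && ~~ far (take p.1 S) (take p.2 St)) M <=
  6 * bad_pairs C.
Proof.
set close_misdecoded := fun p : nat * nat => _; set F := filter close_misdecoded M.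
pose P := [seq (minn p.1 (dec p.2), maxn p.1 (dec p.2)) | p <- F].
have X_uniq : uniq (map fst F).
  case/andP: HM => M_sorted _; apply: (sorted_uniq ltn_trans ltnn).
  by apply: homo_sorted (sorted_filter before_trans _ M_sorted) => p q /andP[].
have P_good : all (good S) P.
  rewrite all_map; apply/allP => p; rewrite mem_filter => /andP[/andP[? ?] ?].
  exact: misdecoded_good.
have X_cov : {in map fst F, forall x, exists2 q, q \in P & x \in [:: q.1; q.2]}.
  move=> _ /mapP[p p_in ->]; exists (minn p.1 (dec p.2), maxn p.1 (dec p.2)).
    exact: map_f.
  by rewrite !inE /minn /maxn; case: ifP => _; rewrite eqxx ?orbT.
have [C [C_ord C_rep _ C_size]] := vitali_covering P_good X_uniq X_cov.
have [C' C'_match C'_bad] := ordered_self_matching C_ord C_rep.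
by exists C' => //; rewrite C'_bad -size_filter -/F -(size_map fst).
Qed.

End Misdecodings.

Unset Implicit Arguments.
Local Open Scope ring_scope.

Theorem theorem34 (R : realType) (T : eqType) (S : seq T) (eps delta : R) :
  self_matching eps S ->
  forall (St : seq T) (M : seq (nat * nat)) (dec : nat -> nat),
    monotone_matching S St M ->
    (num_edits S St M)%:R <= (size S)%:R * delta ->
    min_RSD_decoder R S St dec ->
    (misdecodings M dec)%:R <= (size S)%:R * (4 * delta + 6 * eps).
Proof.
move=> S_self St M dec HM few_edits Hdec.
have [C C_match close_count] := close_misdecodings HM Hdec.
have C_bad := S_self C C_match.
have far_cnt := far_count HM.
have split_count : (misdecodings M dec <=
    count (fun p => far (take p.1 S) (take p.2 St)) M +
    count (fun p => (dec p.2 != p.1) && ~~ far (take p.1 S) (take p.2 St)) M)%N.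
  rewrite -count_predUI; apply: leq_trans (leq_addr _ _); apply: sub_count => p /=.
  by case: far; rewrite ?orbT ?andbT.
have : (misdecodings M dec <= 4 * num_edits S St M + 6 * bad_pairs C)%N by lia.
rewrite -(ler_nat R) natrD !natrM => bound; lra.
Qed.
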